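(* Let $\Gamma\in\mathcal{H}$ and let $f\in P^\Gamma$. Then $\Gamma$ is the homothety type of a generalized rotation set of $f$.
   Context: $\mathbb{T}^2=\mathbb{R}^2/\mathbb{Z}^2$, $R_\theta(x)=x+\theta$; $\overline{\mathcal{O}}^{\infty}(\mathbb{T}^2)$ is the $C^\infty$-closure of $\{h\circ R_\theta\circ h^{-1}: h\in\mathrm{Diff}^\infty(\mathbb{T}^2),\theta\in\mathbb{T}^2\}$. $\mathcal{H}$ is the set of non-empty compact subsets of $\mathbb{R}^2$ modulo translations and positive-ratio homotheties. $d_H$ is the Hausdorff distance. For $r>0$, $K\in\mathcal{LA}_r(\Gamma)$ means $\mathrm{diam}(K)>r$ and some $\hat\Gamma\in\Gamma$ of diameter $1$ satisfies $d_H(K/\mathrm{diam}(K),\hat\Gamma)<1/r$. Let $D=[0,1]^2$ and fix $\tilde x_0\in D$. For $k\in\mathbb{N}^*$, $P_k^\Gamma=\{f\in\overline{\mathcal{O}}^{\infty}(\mathbb{T}^2): \exists n\in\mathbb{N}^*,\ \tilde f^n(D)\in\mathcal{LA}_k(\Gamma)\}$, where $\tilde f$ is a lift of $f$ (the condition does not depend on the lift), and $P^\Gamma=\bigcap_{k\ge1}P_k^\Gamma$. For a lift $\tilde f$ of $f$, a generalized rotation set of $f$ is a Hausdorff limit $\lim_{i}\frac{\tilde f^{n_i}(D)-\tilde f^{n_i}(\tilde x_0)}{\mathrm{diam}(\tilde f^{n_i}(D))}$ along some sequence of natural numbers $(n_i)$ with $\mathrm{diam}(\tilde f^{n_i}(D))\to+\infty$.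 *)

From HB Require Import structures.
From mathcomp Require Import all_boot all_order all_algebra.
From mathcomp Require Import all_classical all_reals all_analysis.

Set Implicit Arguments.
Unset Strict Implicit.
Unset Printing Implicit Defensive.

Import Order.TTheory GRing.Theory Num.Theory.
Import numFieldNormedType.Exports.
Local Open Scope classical_set_scope.
Local Open Scope ring_scope.

Section Torus.
Variable R : realType.

(* points of the plane R^2 (covering space of T^2 = R^2/Z^2) *)
Definition pt := 'rV[R]_2.

Definition edist (x y : pt) : R :=
  Num.sqrt (\sum_(i < 2) (x 0 i - y 0 i) ^+ 2).

Definition diam (K : set pt) : R := sup [set edist x y | x in K & y in K].

Definition dist_to (a : pt) (B : set pt) : R := inf [set edist a b | b in B].
Definition dH (A B : set pt) : R :=
  Num.max (sup [set dist_to a B | a in A]) (sup [set dist_to b A | b in B]).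

Definition ncompact (K : set pt) : Prop := K !=set0 /\ compact K.

(* K2 is the image of K1 by a translation composed with a positive-ratio
   homothety: K1 and K2 have the same class in \mathcal{H} *)
Definition homothetic (K1 K2 : set pt) : Prop :=
  exists (a : pt) (lam : R), 0 < lam /\ K2 = [set a + lam *: x | x in K1].

Definition scale_set (c : R) (K : set pt) : set pt := [set c *: x | x in K].
Definition translate_set (a : pt) (K : set pt) : set pt := [set x + a | x in K].

(* K \in LA_r(Gamma), where Gamma is the class of the compact set G *)
Definition LA (r : R) (G K : set pt) : Prop :=
  diam K > r /\
  exists Gh : set pt, homothetic G Gh /\ diam Gh = 1 /\
     dH (scale_set (diam K)^-1 K) Gh < r^-1.

Definition D : set pt := [set x | forall i : 'I_2, 0 <= x 0 i <= 1].

Definition isZ2 (p : pt) : Prop := forall i : 'I_2, exists z : int, p 0 i = z%:~R.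

(* F : R^2 -> R^2 descends to a map of T^2 *)
Definition descends (F : pt -> pt) : Prop :=
  forall x p, isZ2 p -> isZ2 (F (x + p) - F x).

Fixpoint iderive (vs : seq pt) (F : pt -> pt) : pt -> pt :=
  match vs with
  | [::] => F
  | v :: vs' => fun x => 'D_v (iderive vs' F) x
  end.

Definition smooth (F : pt -> pt) : Prop :=
  forall vs : seq pt, continuous (iderive vs F) /\
    forall (v x : pt), derivable (iderive vs F) x v.

(* H is a lift of an element h of Diff^infty(T^2) *)
Definition diff_lift (H : pt -> pt) : Prop :=
  exists Hinv : pt -> pt,
    cancel H Hinv /\ cancel Hinv H /\ smooth H /\ smooth Hinv /\
    descends H /\ descends Hinv.

(* G is a lift of h o R_theta o h^-1 for some h in Diff^infty(T^2), theta *)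
Definition conj_rot_lift (G : pt -> pt) : Prop :=
  exists (H Hinv : pt -> pt) (theta : pt),
    diff_lift H /\ cancel H Hinv /\ cancel Hinv H /\
    G = (fun x => H (Hinv x + theta)).

(* F is a lift of an element of the C^infty closure of the conjugates of
   rotations: F lifts a diffeomorphism of T^2 and there are lifts G_n of
   conjugates of rotations converging to F in the C^infty topology
   (uniform convergence of all iterated derivatives). *)
Definition closure_O_lift (F : pt -> pt) : Prop :=
  diff_lift F /\
  exists Gs : nat -> pt -> pt,
    (forall n, conj_rot_lift (Gs n)) /\
    forall (vs : seq pt) (e : R), 0 < e ->
      exists N : nat, forall n, (N <= n)%N -> forall x,
        edist (iderive vs (Gs n) x) (iderive vs F x) < e.

Definition iterD (F : pt -> pt) (n : nat) : set pt := (iter n F) @` D.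

(* f \in P^Gamma (through a lift F of f) *)
Definition in_P (G : set pt) (F : pt -> pt) : Prop :=
  closure_O_lift F /\
  forall k : nat, (0 < k)%N -> exists n : nat, (0 < n)%N /\ LA k%:R G (iterD F n).

(* L is a generalized rotation set of f (with lift F, base point x0) *)
Definition gen_rot_set (F : pt -> pt) (x0 : pt) (L : set pt) : Prop :=
  ncompact L /\
  exists ns : nat -> nat,
    (forall M : R, exists N : nat, forall i, (N <= i)%N -> M < diam (iterD F (ns i))) /\
    (forall e : R, 0 < e -> exists N : nat, forall i, (N <= i)%N ->
       dH (scale_set (diam (iterD F (ns i)))^-1
             (translate_set (- iter (ns i) F x0) (iterD F (ns i)))) L < e).

End Torus.

From Pilot Require Import Defs.
From HB Require Import structures.
From mathcomp Require Import all_boot all_order all_algebra.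
From mathcomp Require Import all_classical all_reals all_analysis.
From mathcomp Require Import ring lra.
Set Implicit Arguments.
Unset Strict Implicit.
Unset Printing Implicit Defensive.
Import Order.TTheory GRing.Theory Num.Theory.
Import numFieldNormedType.Exports.
Local Open Scope classical_set_scope.
Local Open Scope ring_scope.

(* Each LA condition says that some iterate K_k = F^{n_k}(D), rescaled by its
   diameter, is Hausdorff-close to a homothetic copy a_k + G/diam G of G.  The
   orbit point q_k = F^{n_k}(x0) lies in K_k, so it sits close to a_k + g_k/diam G
   for some g_k in G, and recentring at q_k makes (K_k - q_k)/diam K_k close to
   (G - g_k)/diam G.  The points g_k have a cluster point g in the compact set G;
   along the corresponding subsequence the recentred iterates converge to
   (G - g)/diam G, which is homothetic to G. *)

Local Notation edist := Defs.edist.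
Local Notation iterD := Defs.iterD.

Section EuclideanDistance.
Variable R : realType.
Implicit Types (x y z p q : 'rV[R]_2) (c : R).

Definition enorm x : R := Num.sqrt (x 0 ord0 ^+ 2 + x 0 ord_max ^+ 2).

Lemma edistE x y : edist x y = enorm (x - y).
Proof.
rewrite /edist /enorm big_ord_recr big_ord_recr big_ord0 /= add0r !mxE.
by congr (Num.sqrt (_ ^+ 2 + _)); congr (x 0 _ - y 0 _); apply/val_inj.
Qed.

Lemma enorm_ge0 x : 0 <= enorm x.
Proof. exact: sqrtr_ge0. Qed.

Lemma enormZ c x : enorm (c *: x) = `|c| * enorm x.
Proof.
rewrite /enorm !mxE -sqrtr_sqr -sqrtrM ?sqr_ge0 //; congr Num.sqrt; ring.
Qed.

Lemma enormN x : enorm (- x) = enorm x.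
Proof. by rewrite -scaleN1r enormZ normrN1 mul1r. Qed.

Lemma enorm0 : enorm (0 : 'rV[R]_2) = 0.
Proof. by rewrite -(scale0r 0) enormZ normr0 mul0r. Qed.

(* Minkowski's inequality: after squaring, it is Cauchy-Schwarz in the plane. *)
Lemma enormD x y : enorm (x + y) <= enorm x + enorm y.
Proof.
rewrite /enorm !mxE.
move: (x 0 ord0) (x 0 ord_max) (y 0 ord0) (y 0 ord_max) => a b c d.
set s := Num.sqrt (a ^+ 2 + _); set t := Num.sqrt (c ^+ 2 + _).
have s0 : 0 <= s by apply: sqrtr_ge0.
have t0 : 0 <= t by apply: sqrtr_ge0.
have s2 : s ^+ 2 = a ^+ 2 + b ^+ 2 by rewrite sqr_sqrtr // addr_ge0 ?sqr_ge0.
have t2 : t ^+ 2 = c ^+ 2 + d ^+ 2 by rewrite sqr_sqrtr // addr_ge0 ?sqr_ge0.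
have cs2 : (a * c + b * d) ^+ 2 <= (s * t) ^+ 2.
  by rewrite exprMn s2 t2; have := sqr_ge0 (a * d - b * c); nra.
have cs : a * c + b * d <= s * t by have := mulr_ge0 s0 t0; nra.
rewrite -(ger0_norm (addr_ge0 s0 t0)) -sqrtr_sqr ler_sqrt ?exprn_ge0 ?addr_ge0 //.
nra.
Qed.

Lemma edist_ge0 x y : 0 <= edist x y.
Proof. by rewrite edistE enorm_ge0. Qed.

Lemma edistxx x : edist x x = 0.
Proof. by rewrite edistE subrr enorm0. Qed.

Lemma edistC x y : edist x y = edist y x.
Proof. by rewrite !edistE -enormN opprB. Qed.

Lemma edistN x y : edist (- x) (- y) = edist x y.
Proof. by rewrite !edistE -opprD enormN. Qed.

Lemma edist_triangle x y z : edist x z <= edist x y + edist y z.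
Proof. by rewrite !edistE -[x - z](subrKA y) enormD. Qed.

Lemma edistDl p x y : edist (p + x) (p + y) = edist x y.
Proof. by rewrite !edistE [p + x]addrC addrKA. Qed.

Lemma edistZ c x y : 0 <= c -> edist (c *: x) (c *: y) = c * edist x y.
Proof. by move=> c0; rewrite !edistE -scalerBr enormZ ger0_norm. Qed.

Lemma edistDD_le x y p q : edist (x + p) (y + q) <= edist x y + edist p q.
Proof. by rewrite !edistE opprD addrACA enormD. Qed.

End EuclideanDistance.

Section HausdorffDistance.
Variable R : realType.
Implicit Types (A B C : set 'rV[R]_2) (a b p q : 'rV[R]_2) (e : R).

Definition dists A : set R := [set edist x y | x in A & y in A].

Definition close_sets A B e :=
  (forall a, A a -> exists2 b, B b & edist a b <= e) /\
  (forall b, B b -> exists2 a, A a & edist a b <= e).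

Lemma has_sup_dists A : 0 < diam A -> has_sup (dists A).
Proof.
by move=> dA; apply: contrapT => /sup_out dA0; move: dA; rewrite /diam dA0 ltxx.
Qed.

Lemma dist_to_le a B b : B b -> dist_to a B <= edist a b.
Proof.
move=> Bb; apply: ge_inf; last by exists b.
by exists 0 => _ [b' _ <-]; apply: edist_ge0.
Qed.

Lemma dist_to_lt a B e : B !=set0 -> dist_to a B < e -> exists2 b, B b & edist a b < e.
Proof.
move=> [b0 Bb0] /(inf_lt (ex_intro _ _ (ex_intro2 _ _ b0 Bb0 erefl))).
by move=> [_ [b Bb <-] ab]; exists b.
Qed.

Lemma has_ubound_dist_to A B : has_sup (dists A) -> B !=set0 ->
  has_ubound [set dist_to a B | a in A].
Proof.
move=> [[_ [a0 Aa0 _]] [M ubM]] [b0 Bb0].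
exists (M + edist a0 b0) => _ [a Aa <-].
apply: le_trans (dist_to_le a Bb0) _; apply: le_trans (edist_triangle a a0 b0) _.
by rewrite lerD2r ubM //; exists a => //; exists a0.
Qed.

Lemma close_sets_dH_le A B e : A !=set0 -> B !=set0 -> close_sets A B e ->
  dH A B <= e.
Proof.
move=> [a0 Aa0] [b0 Bb0] [AB BA]; rewrite ge_max; apply/andP; split.
  apply: ge_sup; first by exists (dist_to a0 B), a0.
  by move=> _ [a /AB[b Bb ab] <-]; apply: le_trans (dist_to_le a Bb) ab.
apply: ge_sup; first by exists (dist_to b0 A), b0.
move=> _ [b /BA[a Aa ab] <-]; rewrite edistC in ab.
exact: le_trans (dist_to_le b Aa) ab.
Qed.

Lemma dH_lt_close_sets A B e : has_sup (dists A) -> has_sup (dists B) ->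
  dH A B < e -> close_sets A B e.
Proof.
move=> supA supB ABe.
have [[_ [a0 Aa0 _]] _] := supA; have [[_ [b0 Bb0 _]] _] := supB.
split=> [a Aa | b Bb].
  have aB : dist_to a B < e.
    apply: le_lt_trans ABe; rewrite le_max ub_le_sup //; last by exists a.
    exact: has_ubound_dist_to supA (ex_intro _ b0 Bb0).
  by have [|b Bb /ltW] := dist_to_lt _ aB; [exists b0 | exists b].
have bA : dist_to b A < e.
  apply: le_lt_trans ABe; rewrite le_max [X in _ || X]ub_le_sup ?orbT //.
    exact: has_ubound_dist_to supB (ex_intro _ a0 Aa0).
  by exists b.
by have [|a Aa /ltW] := dist_to_lt _ bA; [exists a0 | rewrite edistC; exists a].
Qed.

Lemma close_sets_le A B e e' : close_sets A B e -> e <= e' -> close_sets A B e'.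
Proof.
move=> [AB BA] ee'; split=> [a /AB[b] | b /BA[a]]; [exists b|exists a] => //;
  exact: le_trans ee'.
Qed.

Lemma close_sets_trans A B C e e' :
  close_sets A B e -> close_sets B C e' -> close_sets A C (e + e').
Proof.
move=> [AB BA] [BC CB]; split=> [a /AB[b /BC[c Cc bc] ab] | c /CB[b /BA[a Aa ab] bc]].
  by exists c => //; apply: le_trans (edist_triangle a b c) _; rewrite lerD.
by exists a => //; apply: le_trans (edist_triangle a b c) _; rewrite lerD.
Qed.

Lemma close_sets_translate A B e p q : close_sets A B e ->
  close_sets (translate_set p A) (translate_set q B) (e + edist p q).
Proof.
move=> [AB BA]; split=> [_ [a /AB[b Bb ab] <-] | _ [b /BA[a Aa ab] <-]].
  exists (b + q); first by exists b.
  by apply: le_trans (edistDD_le _ _ _ _) _; rewrite lerD2r.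
exists (a + p); first by exists a.
by apply: le_trans (edistDD_le _ _ _ _) _; rewrite lerD2r.
Qed.

End HausdorffDistance.

Section Homothety.
Variable R : realType.
Implicit Types (G K : set 'rV[R]_2) (a b p q x y : 'rV[R]_2) (c lam : R).

Definition hom_image a lam G := [set a + lam *: x | x in G].

Lemma sup_scale c (S : set R) : 0 < c -> sup [set c * x | x in S] = c * sup S.
Proof.
move=> c0; have [[[x0 Sx0] [M ubM]] | supS_N] := pselect (has_sup S).
  have supcS : has_sup [set c * x | x in S].
    split; first by exists (c * x0), x0.
    by exists (c * M) => _ [x Sx <-]; rewrite ler_pM2l // ubM.
  have ubS : has_ubound S by exists M.
  apply/le_anti/andP; split.
    apply: ge_sup; first by case: supcS.
    by move=> _ [x Sx <-]; rewrite ler_pM2l // ub_le_sup.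
  rewrite -ler_pdivlMl //; apply: ge_sup; first by exists x0.
  move=> x Sx; rewrite ler_pdivlMl //.
  by apply: ub_le_sup; [case: supcS | exists x].
rewrite (sup_out supS_N) mulr0 sup_out // => -[[_ [x0 Sx0 _]] [M ubM]].
apply: supS_N; split; first by exists x0.
by exists (c^-1 * M) => x Sx; rewrite ler_pdivlMl // ubM //; exists x.
Qed.

Lemma dists_hom_image a lam G : 0 <= lam ->
  dists (hom_image a lam G) = [set lam * t | t in dists G].
Proof.
move=> lam0; apply/seteqP; split.
  move=> _ [_ [x Gx <-] [_ [y Gy <-] <-]].
  by exists (edist x y); [exists x => //; exists y | rewrite edistDl edistZ].
move=> _ [_ [x Gx [y Gy <-]] <-].
exists (a + lam *: x); first by exists x.
by exists (a + lam *: y); [exists y | rewrite edistDl edistZ].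
Qed.

Lemma diam_hom_image a lam G : 0 < lam -> diam (hom_image a lam G) = lam * diam G.
Proof. by move=> lam0; rewrite /diam -!/(dists _) dists_hom_image ?ltW // sup_scale. Qed.

Lemma scale_setE c K : scale_set c K = hom_image 0 c K.
Proof. by apply/seteqP; split=> _ [x Kx <-]; exists x; rewrite ?add0r. Qed.

Lemma translate_hom_image p a lam G :
  translate_set p (hom_image a lam G) = hom_image (a + p) lam G.
Proof.
by apply/seteqP; split=> [_ [_ [x Gx <-] <-] | _ [x Gx <-]];
  [exists x | exists (a + lam *: x); [exists x|]]; rewrite // addrAC.
Qed.

Lemma translate_scale_set c q K :
  translate_set (c *: q) (scale_set c K) = scale_set c (translate_set q K).
Proof.
by apply/seteqP; split=> [_ [_ [x Kx <-] <-] | _ [_ [x Kx <-] <-]];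
  [exists (x + q); [exists x|] | exists (c *: x); [exists x|]]; rewrite // scalerDr.
Qed.

Lemma close_sets_hom_image a b lam G :
  close_sets (hom_image a lam G) (hom_image b lam G) (edist a b).
Proof.
have shift x : edist (a + lam *: x) (b + lam *: x) <= edist a b.
  by apply: le_trans (edistDD_le _ _ _ _) _; rewrite edistxx addr0.
split=> _ [x Gx <-].
  by exists (b + lam *: x); [exists x | exact: shift].
by exists (a + lam *: x); [exists x | exact: shift].
Qed.

Lemma hom_image_compact a lam G : compact G -> compact (hom_image a lam G).
Proof.
move=> Gc; apply: continuous_compact Gc; apply: continuous_subspaceT => x.
exact: (cvgD (cvg_cst a) (cvgZ (cvg_cst lam) cvg_id)).
Qed.

End Homothety.

Section RotationSets.
Variable R : realType.
Implicit Types (G K L : set 'rV[R]_2) (q x : 'rV[R]_2) (r : R).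

Lemma LA_hom_image r G K : LA r G K ->
  0 < diam G /\
  exists a, dH (scale_set (diam K)^-1 K) (hom_image a (diam G)^-1 G) < r^-1.
Proof.
move=> [_ [_ [[a [lam [lam0 ->]]] [diam1 dHK]]]].
have /mulr1_eq lamE : diam G * lam = 1 by rewrite mulrC -diam1 diam_hom_image.
by rewrite lamE; split; [rewrite -invr_gt0 lamE | exists a].
Qed.

(* q/diam K is within 1/r of some a + g/diam G, and recentring at q costs that
   much again. *)
Lemma LA_recentred r G K q : 0 < r -> K q -> LA r G K ->
  exists g, G g /\
    close_sets (scale_set (diam K)^-1 (translate_set (- q) K))
      (hom_image (- ((diam G)^-1 *: g)) (diam G)^-1 G) (2 / r).
Proof.
move=> r0 Kq LAK; have [dK _] := LAK; have [dG [a dHa]] := LA_hom_image LAK.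
set lam := (diam G)^-1; set c := (diam K)^-1.
have dK0 : 0 < diam K := lt_trans r0 dK.
have [cK_Ga Ga_cK] : close_sets (scale_set c K) (hom_image a lam G) r^-1.
  apply: dH_lt_close_sets dHa; apply: has_sup_dists.
    by rewrite scale_setE diam_hom_image ?invr_gt0 // mulVf ?gt_eqF.
  by rewrite diam_hom_image ?invr_gt0 // mulVf ?gt_eqF.
have [_ [g Gg <-] qg] := cK_Ga (c *: q) (ex_intro2 _ _ q Kq erefl).
exists g; split=> //.
have := close_sets_translate (- (c *: q)) (- (a + lam *: g)) (conj cK_Ga Ga_cK).
rewrite edistN -scalerN translate_scale_set translate_hom_image opprD addNKr.
by move/close_sets_le; apply; move: qg; lra.
Qed.

Lemma nbhs_edist_lt x (e : R) : 0 < e -> nbhs x [set y | edist y x < e].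
Proof.
move=> e0; have e2 : 0 < e / 2 by rewrite divr_gt0.
apply: filterS (nbhsx_ballx x _ e2) => y [_ xy] /=.
have := xy 0 ord0; have := xy 0 ord_max; rewrite -!ball_normE /= => y1 y0.
rewrite edistC edistE /enorm !mxE -(gtr0_norm e0) -sqrtr_sqr ltr_sqrt ?exprn_gt0 //.
by move: y0 y1 => /ltr_normlP[? ?] /ltr_normlP[? ?]; nra.
Qed.

Lemma compact_cluster_subseq G (g : nat -> 'rV[R]_2) :
  compact G -> (forall k, G (g k)) ->
  exists gs, G gs /\ exists phi : nat -> nat,
    forall i, (i <= phi i)%N /\ edist (g (phi i)) gs < i.+1%:R^-1.
Proof.
move=> Gc Gg; have [gs [Ggs gs_cluster]] : G `&` cluster (g @ \oo) !=set0.
  by apply: Gc; exists 0%N => // n _; exact: Gg.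
exists gs; split=> //.
suff /choice[phi near_gs] :
    forall i, exists k, (i <= k)%N /\ edist (g k) gs < i.+1%:R^-1.
  by exists phi.
move=> i.
have tail_i : (g @ \oo) [set g k | k in [set k | (i <= k)%N]].
  by exists i => // n /= ni; exists n.
have i_gt0 : 0 < i.+1%:R^-1 :> R by rewrite invr_gt0 ltr0Sn.
have [_ [[k ik <-] gk_gs]] := gs_cluster _ _ tail_i (nbhs_edist_lt gs i_gt0).
by exists k.
Qed.

Lemma eventually_div_succ_lt (C e : R) : 0 < e ->
  exists N, forall i, (N <= i)%N -> C / i.+1%:R < e.
Proof.
move=> e0; exists (Num.truncn (C / e)) => i Ni.
rewrite ltr_pdivrMr // -ltr_pdivrMl // mulrC.
by apply: lt_le_trans (truncnS_gt _) _; rewrite ler_nat ltnS.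
Qed.

Lemma gen_rot_set_of_close_sets (F : pt R -> pt R) x0 L (ns : nat -> nat) (C : R) :
  D x0 -> ncompact L ->
  (forall i, i.+1%:R < diam (iterD F (ns i))) ->
  (forall i, close_sets
     (scale_set (diam (iterD F (ns i)))^-1
        (translate_set (- iter (ns i) F x0) (iterD F (ns i))))
     L (C / i.+1%:R)) ->
  gen_rot_set F x0 L.
Proof.
move=> Dx0 [L0 Lc] diverge close_L; split=> //; exists ns; split.
  move=> M; exists (Num.truncn M) => i Ni; apply: lt_trans (diverge i).
  by apply: lt_le_trans (truncnS_gt M) _; rewrite ler_nat ltnS.
move=> e e0; have [N small] := eventually_div_succ_lt C e0.
exists N => i Ni; apply: le_lt_trans (small i Ni).
apply: close_sets_dH_le (close_L i) => //.
set q := iter (ns i) F x0; set c := (diam (iterD F (ns i)))^-1.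
by exists (c *: (q - q)); exists (q - q) => //; exists q => //; exists x0.
Qed.

End RotationSets.

Theorem mainTheorem8 (R : realType) (x0 : pt R) (G : set (pt R)) (F : pt R -> pt R) :
  D x0 -> ncompact G -> in_P G F ->
  exists L : set (pt R), gen_rot_set F x0 L /\ homothetic G L.
Proof.
move=> Dx0 [G0 Gc] [_ inP_F].
have /choice[n LAn] : forall k, exists n, LA k.+1%:R G (iterD F n).
  by move=> k; have [n [_ LAk]] := inP_F k.+1 isT; exists n.
have /choice[g Hg] := fun k =>
  LA_recentred (ltr0Sn _ k) (ex_intro2 _ _ x0 Dx0 erefl) (LAn k).
have [dG _] := LA_hom_image (LAn 0%N).
set lam := (diam G)^-1 in Hg; have lam0 : 0 < lam by rewrite invr_gt0.
have [gs [Ggs [phi Hphi]]] := compact_cluster_subseq Gc (fun k => (Hg k).1).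
exists (hom_image (- (lam *: gs)) lam G); split; last first.
  by exists (- (lam *: gs)), lam.
apply: (gen_rot_set_of_close_sets (ns := n \o phi) (C := 2 + lam)) => //.
- split; last exact: hom_image_compact.
  by case: G0 => x Gx; exists (- (lam *: gs) + lam *: x), x.
- move=> i; have [i_phi _] := Hphi i; have [dK _] := LAn (phi i).
  by apply: le_lt_trans dK; rewrite ler_nat ltnS.
move=> i; have [i_phi near_gs] := Hphi i.
apply: close_sets_le (close_sets_trans (Hg (phi i)).2 (close_sets_hom_image _ _ _ _)) _.
rewrite edistN (edistZ _ _ (ltW lam0)) [X in _ <= X]mulrDl.
apply: lerD; last by rewrite ler_pM2l // ltW.
by rewrite ler_pM2l // lef_pV2 ?posrE ?ltr0Sn // ler_nat ltnS.
Qed.
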